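(* Let $n\ge1$, $0\le m$, and let $T\in\mathbb R[x,u_0,\dots,u_n]$ satisfy $T(\mathcal P_n)\subset\mathcal P_m$. Decompose $T=\sum_{\ell,k}T_{\ell,k}$ where $T_{\ell,k}$ is the sum of those monomial terms $C\,x^ju_{i_1}\cdots u_{i_\ell}$ of $T$ that have degree $\ell$ in the $u$-variables and weight $j+n\ell-(i_1+\cdots+i_\ell)=k$. Then each $T_{\ell,k}$ also satisfies $T_{\ell,k}(\mathcal P_n)\subset\mathcal P_m$.
   Context: Elements $P\in\mathbb R[x,u_0,\dots,u_n]$ act on smooth $f$ by $P[f](x)=P(x,f(x),f'(x),\dots,f^{(n)}(x))$. $\mathcal P_s$ is the space of real polynomials in $x$ of degree at most $s$. The weight is defined on monomials by $\operatorname{wt}(x)=1$, $\operatorname{wt}(u_i)=n-i$, extended multiplicatively-additively. *)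

From HB Require Import structures.
From mathcomp Require Import all_boot all_order all_algebra.
From mathcomp Require Import reals.
From mathcomp Require Import mpoly.
Set Implicit Arguments. Unset Strict Implicit. Unset Printing Implicit Defensive.
Import Order.TTheory GRing.Theory Num.Theory.
Local Open Scope ring_scope.

(* Variables of {mpoly R[n.+2]}: index 0 is x, index i.+1 is u_i (i = 0..n). *)

Definition act (R : realType) (n : nat) (P : {mpoly R[n.+2]}) (f : {poly R}) : R -> R :=
  fun x => P.@[fun i : 'I_n.+2 => if (i : nat) == 0%N then x else (f^`(i.-1)).[x]].

Definition inPs (R : realType) (s : nat) (g : R -> R) : Prop :=
  exists q : {poly R}, (size q <= s.+1)%N /\ forall x, g x = q.[x].

Definition udeg (n : nat) (m : 'X_{1..n.+2}) : nat :=
  (\sum_(i < n.+2 | (i : nat) != 0%N) m i)%N.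

Definition wt (n : nat) (m : 'X_{1..n.+2}) : nat :=
  (m ord0 + \sum_(i < n.+2 | (i : nat) != 0%N) (n - (i.-1)) * m i)%N.

Definition Tpart (R : realType) (n : nat) (T : {mpoly R[n.+2]}) (l k : nat)
  : {mpoly R[n.+2]} :=
  \sum_(m <- msupp T | (udeg m == l) && (wt m == k)) T@_m *: 'X_[m].

(* Substituting the rescaled polynomial f_t(x) = t^(N+n) f(x/t) into T, every
   monomial of u-degree l and weight k acquires the factor t^(l N + k), up to
   the degree-preserving dilation x -> x/t.  For N larger than every weight,
   l N + k determines (l, k).  So for each coefficient index j > m, the j-th
   coefficient of T[f_t] is a polynomial in t vanishing at every t <> 0,
   hence zero, and its coefficient of t^(l N + k) is the j-th coefficient of
   T_(l,k)[f]. *)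

From HB Require Import structures.
From mathcomp Require Import all_boot all_order all_algebra.
From mathcomp Require Import reals.
From mathcomp Require Import mpoly.
Set Implicit Arguments. Unset Strict Implicit. Unset Printing Implicit Defensive.
Import Order.TTheory GRing.Theory Num.Theory.
Local Open Scope ring_scope.

Lemma eqn_mulDr_small (d q r q' r' : nat) : (r < d)%N -> (r' < d)%N ->
  (q * d + r == q' * d + r')%N = (q == q') && (r == r').
Proof.
move=> ltrd ltr'd; apply/eqP/andP => [E | [/eqP-> /eqP->]] //.
by have := congr1 (edivn^~ d) E; rewrite !edivn_eq // => -[-> ->].
Qed.

Section PolyFacts.
Variable R : numDomainType.

Lemma poly_eq0_nonzero (p : {poly R}) : (forall t, t != 0 -> p.[t] = 0) -> p = 0.
Proof.
move=> p0; apply: (@roots_geq_poly_eq0 _ p [seq i.+1%:R | i <- iota 0 (size p)]).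
- by apply/allP => _ /mapP [i _ ->]; rewrite /root p0 ?pnatr_eq0.
- by rewrite map_inj_uniq ?iota_uniq // => i j /eqP; rewrite eqr_nat => /eqP [].
- by rewrite size_map size_iota.
Qed.

Lemma poly_horner_inj (p q : {poly R}) : (forall x, p.[x] = q.[x]) -> p = q.
Proof.
move=> pq; apply/eqP; rewrite -subr_eq0; apply/eqP.
by apply: poly_eq0_nonzero => t _; rewrite hornerD hornerN pq subrr.
Qed.

Lemma size_sum_homog_le (I : Type) (s : seq I) (c : I -> R) (e : I -> nat)
    (p : I -> {poly R}) (b d : nat) :
  (forall t, t != 0 -> (size (\sum_(i <- s) (c i * t ^+ e i) *: p i)%R <= b)%N) ->
  (size (\sum_(i <- s | e i == d) c i *: p i)%R <= b)%N.
Proof.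
move=> sizeb; apply/leq_sizeP => j ltbj.
have coef_t0 : \sum_(i <- s) (c i * (p i)`_j) *: 'X^(e i) = 0.
  apply: poly_eq0_nonzero => t t0.
  rewrite horner_sum -[RHS](leq_sizeP _ _ (sizeb t t0) j ltbj) coef_sum.
  by apply: eq_bigr => i _; rewrite hornerZ hornerXn coefZ mulrAC.
rewrite coef_sum -[RHS](coef0 _ d) -coef_t0 coef_sum big_mkcond /=.
apply: eq_bigr => i _; rewrite !coefZ coefXn eq_sym.
by case: (_ == _); rewrite ?mulr1 ?mulr0.
Qed.

End PolyFacts.

Section Dilation.
Variable R : fieldType.

Definition dilate (t : R) (p : {poly R}) : {poly R} := p \Po (t^-1 *: 'X).

Lemma size_dilate (t : R) (p : {poly R}) : t != 0 -> size (dilate t p) = size p.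
Proof. by move=> t0; rewrite size_comp_poly2 // size_scale ?invr_eq0 ?size_polyX. Qed.

Lemma derivn_dilate (t : R) (p : {poly R}) j :
  (dilate t p)^`(j) = t^-1 ^+ j *: dilate t p^`(j).
Proof.
elim: j => [|j IHj]; first by rewrite expr0 scale1r.
rewrite !derivnS IHj derivZ deriv_comp derivZ derivX exprSr -scalerA.
by rewrite -scalerAr mulr1.
Qed.

End Dilation.

Section Jets.
Variables (R : realType) (n : nat).

Definition jet (f : {poly R}) (i : 'I_n.+2) : {poly R} :=
  if (i : nat) == 0%N then 'X else f^`(i.-1).

Definition jet_monomial (f : {poly R}) (m : 'X_{1..n.+2}) : {poly R} :=
  \prod_(i < n.+2) jet f i ^+ m i.

Lemma act_jet (P : {mpoly R[n.+2]}) f x : act P f x = P.@[fun i => (jet f i).[x]].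
Proof. by apply: meval_eq => i; rewrite /jet; case: ifP; rewrite ?hornerX. Qed.

Lemma act_sum_monomials (P : {mpoly R[n.+2]}) (r : seq 'X_{1..n.+2})
    (F : pred 'X_{1..n.+2}) f x :
  act (\sum_(m <- r | F m) P@_m *: 'X_[m]) f x =
  (\sum_(m <- r | F m) P@_m *: jet_monomial f m).[x].
Proof.
rewrite act_jet raddf_sum /= horner_sum; apply: eq_bigr => m _.
rewrite mevalZ hornerZ mevalX horner_prod; congr (_ * _).
by apply: eq_bigr => i _; rewrite horner_exp.
Qed.

Lemma actE (P : {mpoly R[n.+2]}) f x :
  act P f x = (\sum_(m <- msupp P) P@_m *: jet_monomial f m).[x].
Proof. by rewrite {1}(mpolyE P) act_sum_monomials. Qed.

Definition rescale (t : R) (N : nat) (f : {poly R}) : {poly R} :=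
  t ^+ (N + n) *: dilate t f.

Lemma size_rescale t N f : t != 0 -> (size (rescale t N f) <= size f)%N.
Proof. by move=> t0; rewrite (leq_trans (size_scale_leq _ _)) ?size_dilate. Qed.

Lemma jet_rescale t N f (i : 'I_n.+2) : t != 0 ->
  jet (rescale t N f) i =
  t ^+ (if (i : nat) == 0%N then 1 else N + (n - i.-1))%N *: dilate t (jet f i).
Proof.
move=> t0; rewrite /jet; case: ifP => _.
  by rewrite /dilate comp_polyX scalerA expr1 mulfV // scale1r.
have le_in : (i.-1 <= n)%N by case: i => [[|j]] //= /ltnSE.
rewrite derivnZ derivn_dilate scalerA; congr (_ *: _).
rewrite -{1}(subnK le_in) addnA exprD exprVn mulfK //; exact: expf_neq0.
Qed.

Lemma jet_monomial_rescale t N f m : t != 0 ->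
  jet_monomial (rescale t N f) m =
  t ^+ (udeg m * N + wt m) *: dilate t (jet_monomial f m).
Proof.
move=> t0; rewrite /jet_monomial.
under eq_bigr do rewrite jet_rescale // exprZn -exprM.
rewrite scaler_prod prodrXr /dilate rmorph_prod.
congr (t ^+ _ *: _); last by apply: eq_bigr => i _; rewrite rmorphXn.
rewrite (bigD1 ord0) //= mul1n /wt /udeg addnCA mulnC; congr (_ + _)%N.
rewrite big_distrr /= -big_split /=.
by apply: eq_big => -[[|j] ltjn] //= _; rewrite mulnDl.
Qed.

Lemma inPs_size s (p : {poly R}) : inPs s (horner p) -> (size p <= s.+1)%N.
Proof. by case=> q [sizeq /poly_horner_inj ->]. Qed.

Lemma size_act_rescale (T : {mpoly R[n.+2]}) s (f : {poly R}) (t : R) N :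
  (forall g : {poly R}, (size g <= n.+1)%N -> inPs s (act T g)) ->
  (size f <= n.+1)%N -> t != 0 ->
  (size (\sum_(m <- msupp T) (T@_m * t ^+ (udeg m * N + wt m)) *: jet_monomial f m)%R
    <= s.+1)%N.
Proof.
move=> hT sizef t0.
have [q [sizeq actq]] := hT _ (leq_trans (size_rescale N f t0) sizef).
rewrite -(size_dilate _ t0); apply: inPs_size; exists q; split => // x.
rewrite -actq actE /dilate raddf_sum; congr (horner _ x); apply: eq_bigr => mm _.
by rewrite jet_monomial_rescale // scalerA /= comp_polyZ.
Qed.

End Jets.

Theorem mainTheorem7 (R : realType) (n m : nat) (T : {mpoly R[n.+2]}) :
  (1 <= n)%N ->
  (forall f : {poly R}, (size f <= n.+1)%N -> inPs m (act T f)) ->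
  forall l k : nat,
  forall f : {poly R}, (size f <= n.+1)%N -> inPs m (act (Tpart T l k) f).
Proof.
move=> _ hT l k f sizef.
pose N := (k + \max_(mm <- msupp T) wt mm).+1.
have ltkN : (k < N)%N by rewrite ltnS leq_addr.
have ltwtN mm : mm \in msupp T -> (wt mm < N)%N.
  move=> suppmm; rewrite ltnS; apply: (leq_trans _ (leq_addl k _)).
  exact: (@leq_bigmax_seq _ _ predT).
exists (\sum_(mm <- msupp T | (udeg mm == l) && (wt mm == k)) T@_mm *: jet_monomial f mm).
split; last by move=> x; rewrite act_sum_monomials.
have -> : \sum_(mm <- msupp T | (udeg mm == l) && (wt mm == k)) T@_mm *: jet_monomial f mm
        = \sum_(mm <- msupp T | udeg mm * N + wt mm == l * N + k) T@_mm *: jet_monomial f mm.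
  rewrite big_seq_cond [RHS]big_seq_cond; apply: eq_bigl => mm.
  by case: (boolP (mm \in msupp T)) => //= /ltwtN ltwtmmN; rewrite eqn_mulDr_small.
by apply: size_sum_homog_le => t t0; apply: size_act_rescale.
Qed.
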